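(* Let $(M,S)$ be a spin$^c$ pair in standard form, with diagonal blocks of degrees $k,l,r$ ($k+l=|S|$, $n=k+l+r$), and let $k+l<m\le n$. Then there is $a\in\{2,3\}$ such that the $m$-th row of $M$ has the form $M_m=[\,a,\dots,a,\ \bar a,\dots,\bar a,\ *\,]$ (first $k$ entries equal to $a$, next $l$ entries equal to $\bar a$), and $k\cdot a+l\cdot\bar a+(k-l-1)\cdot 2=a$ in $\mathcal S$ (integer multiples taken in the $\mathbb Z_2$-vector space $\mathcal S$).
   Context: $\mathcal S=\{0,1,2,3\}$ is the Klein four-group ($\mathbb Z_2$-vector space) with $x+x=0$, $1+2=3$, $1+3=2$, $2+3=1$; conjugation is the involution $\bar0=0,\bar1=1,\bar2=3,\bar3=2$. $\mathcal P_n$ is the power set of $\{1,\dots,n\}$ (addition = symmetric difference); $|U|_2=|U|\bmod2$; $J_M(U)=\{j:\sum_{i\in U}M_{ij}=1\}$; $r_i^S(M)=\sum_{j\in S}M_{ij}$. $(M,S)$ is a spin$^c$ pair if $|(J_M(U)+U)\cap S|_2=\binom{|U|}2\bmod 2$ for all $U\in\mathcal P_n$. A square matrix is distinguished if it has $1$ on the diagonal and $2$ or $3$ off it; self-conjugate if $A^t=\overline A$. A spin$^c$ pair $(M,S)$ is in standard form if: (i) $S=\{1,\dots,|S|\}$; (ii) the first row of $M$ is $[1,2,\dots,2]$; (iii) $M$ is distinguished with block form $\begin{bmatrix}A&2&*\\2&B&*\\ *&*&*\end{bmatrix}$ with diagonal blocks of degrees $k,l,r$ (the blocks marked $2$ have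 all entries $2$); (iv) $k\ge l$ and $k+l=|S|$; (v) $A,B$ are self-conjugate; (vi) $r_1^S(M)=\dots=r_k^S(M)\ne r_{k+1}^S(M)=\dots=r_{k+l}^S(M)$ (possibly $l=0$). *)

From mathcomp Require Import all_boot all_order all_algebra.
Set Implicit Arguments. Unset Strict Implicit. Unset Printing Implicit Defensive.

(* The Klein four-group S = {0,1,2,3}, carried by 'I_4. *)
Definition K4 := 'I_4.

Definition k0 : K4 := inord 0.
Definition k1 : K4 := inord 1.
Definition k2 : K4 := inord 2.
Definition k3 : K4 := inord 3.

(* addition table on values: x+x=0, 0 neutral, 1+2=3, 1+3=2, 2+3=1 *)
Definition kadd_nat (a b : nat) : nat :=
  if a == b then 0%N else if a == 0%N then b else if b == 0%N then a
  else (6 - a - b)%N.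

Definition kadd (x y : K4) : K4 := inord (kadd_nat x y).

Definition kconj (x : K4) : K4 :=
  if val x == 2%N then k3 else if val x == 3%N then k2 else x.

Definition kmulz (z : int) (x : K4) : K4 := if odd `|z|%N then x else k0.

Definition ksum (I : finType) (A : {set I}) (F : I -> K4) : K4 :=
  \big[kadd/k0]_(i in A) F i.

Definition symdiff (T : finType) (A B : {set T}) : {set T} :=
  (A :\: B) :|: (B :\: A).

Definition JM n (M : 'M[K4]_n) (U : {set 'I_n}) : {set 'I_n} :=
  [set j | ksum U (fun i => M i j) == k1].

Definition rS n (M : 'M[K4]_n) (S : {set 'I_n}) (i : 'I_n) : K4 :=
  ksum S (fun j => M i j).

Definition spinc_pair n (M : 'M[K4]_n) (S : {set 'I_n}) : Prop :=
  forall U : {set 'I_n},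
    odd #|symdiff (JM M U) U :&: S| = odd 'C(#|U|, 2).

(* Standard form with diagonal block degrees k, l, r (indices are 0-based:
   the paper's index i corresponds to the ordinal of value i-1). *)
Definition standard_form n (M : 'M[K4]_n) (S : {set 'I_n}) (k l r : nat) : Prop :=
  spinc_pair M S /\
  n = (k + l + r)%N /\
  S = [set i : 'I_n | (val i < #|S|)%N] /\
  [/\
      (forall i j : 'I_n, val i = 0%N ->
          M i j = if val j == 0%N then k1 else k2),
      [/\ (forall i : 'I_n, M i i = k1),
          (forall i j : 'I_n, i != j -> M i j = k2 \/ M i j = k3) &
          (forall i j : 'I_n, (i < k)%N -> (k <= j < k + l)%N ->
              M i j = k2 /\ M j i = k2)],
      (l <= k)%N /\ (k + l)%N = #|S|,
      (forall i j : 'I_n, (i < k)%N -> (j < k)%N -> M j i = kconj (M i j)) /\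
      (forall i j : 'I_n, (k <= i < k + l)%N -> (k <= j < k + l)%N ->
          M j i = kconj (M i j)) &
      [/\ (forall i j : 'I_n, (i < k)%N -> (j < k)%N -> rS M S i = rS M S j),
          (forall i j : 'I_n, (k <= i < k + l)%N -> (k <= j < k + l)%N ->
              rS M S i = rS M S j) &
          (forall i j : 'I_n, (i < k)%N -> (k <= j < k + l)%N ->
              rS M S i != rS M S j)]].

From mathcomp Require Import all_boot all_order all_algebra zify.
Set Implicit Arguments. Unset Strict Implicit. Unset Printing Implicit Defensive.

(* The Klein group K4 is the F_2-plane with basis 1, 2, so every x is given by
   its two coordinates [coord1 x] (x is 1 or 3) and [coord2 x] (x is 2 or 3),
   both additive.  For a distinguished matrix every off-diagonal entry has
   coord2 = 1, so such an entry is determined by its coord1: it is 3 or 2.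

   1. Coordinates of K4 and their additivity (also over finite sums).
   2. For a spin^c pair (M,S) with M distinguished, the condition applied to
      U = {i, m} with i in S and m not in S gives
        coord1 (M m i) = coord1 (r_i^S) + T + 1,  T = sum_{t in S} coord1 (M m t).
   3. In standard form coord1 (r_i^S) is 1 on the A-block (it equals the row
      sum of row 1 = [1,2,...,2]) and 0 on the B-block (the row sums differ,
      but all rows of S have the same coord2 since M is distinguished).
   Hence row m is a on the A-block and conj a on the B-block, with a = 3 iff
   T = 1; summing over S gives T = k T + l (1 + T) mod 2, and the claimed
   identity in S is a finite case check on the parities of T, k, l. *)

Definition coord1 (x : K4) : bool := (val x == 1%N) || (val x == 3%N).
Definition coord2 (x : K4) : bool := (val x == 2%N) || (val x == 3%N).

Lemma val_k0 : val k0 = 0%N. Proof. by rewrite /k0 /= inordK. Qed.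
Lemma val_k1 : val k1 = 1%N. Proof. by rewrite /k1 /= inordK. Qed.
Lemma val_k2 : val k2 = 2%N. Proof. by rewrite /k2 /= inordK. Qed.
Lemma val_k3 : val k3 = 3%N. Proof. by rewrite /k3 /= inordK. Qed.

Lemma val_kadd x y : val (kadd x y) = kadd_nat x y.
Proof.
rewrite /kadd /= inordK //.
by case: x => [[|[|[|[|?]]]] ?] //; case: y => [[|[|[|[|?]]]] ?].
Qed.

Lemma coord1_add x y : coord1 (kadd x y) = coord1 x (+) coord1 y.
Proof.
rewrite /coord1 val_kadd.
by case: x => [[|[|[|[|?]]]] ?] //; case: y => [[|[|[|[|?]]]] ?].
Qed.

Lemma coord2_add x y : coord2 (kadd x y) = coord2 x (+) coord2 y.
Proof.
rewrite /coord2 val_kadd.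
by case: x => [[|[|[|[|?]]]] ?] //; case: y => [[|[|[|[|?]]]] ?].
Qed.

Lemma coord_inj x y : coord1 x = coord1 y -> coord2 x = coord2 y -> x = y.
Proof.
by case: x => [[|[|[|[|?]]]] ?] //; case: y => [[|[|[|[|?]]]] ?] // _ _;
  apply: val_inj.
Qed.

Lemma coord1_ksum (I : finType) (A : {set I}) (F : I -> K4) :
  coord1 (ksum A F) = \big[addb/false]_(i in A) coord1 (F i).
Proof. by apply: (big_morph coord1 coord1_add); rewrite /coord1 val_k0. Qed.

Lemma coord2_ksum (I : finType) (A : {set I}) (F : I -> K4) :
  coord2 (ksum A F) = \big[addb/false]_(i in A) coord2 (F i).
Proof. by apply: (big_morph coord2 coord2_add); rewrite /coord2 val_k0. Qed.

Lemma eq_k1_coord x : (x == k1) = coord1 x && ~~ coord2 x.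
Proof.
apply/eqP/idP => [->|/andP[c1 /negbTE c2]]; first by rewrite /coord1 /coord2 val_k1.
by apply: coord_inj; rewrite ?c1 ?c2 /coord1 /coord2 val_k1.
Qed.

Lemma big_addb_odd (I : finType) (A : {set I}) (P : pred I) :
  \big[addb/false]_(t in A) P t = odd #|[set t in A | P t]|.
Proof.
rewrite -sum1dep_card (big_morph odd oddD (erefl : odd 0 = false)).
by rewrite big_mkcondr; apply: eq_bigr => t _; case: (P t).
Qed.

Section Distinguished.

Variables (n : nat) (M : 'M[K4]_n) (S : {set 'I_n}).
Hypothesis M_diag : forall i, M i i = k1.
Hypothesis M_offdiag : forall i j, i != j -> M i j = k2 \/ M i j = k3.

Lemma coord2_offdiag i j : i != j -> coord2 (M i j).
Proof. by move/M_offdiag => [->|->]; rewrite /coord2 ?val_k2 ?val_k3. Qed.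

Lemma coord2_diag i : coord2 (M i i) = false.
Proof. by rewrite M_diag /coord2 val_k1. Qed.

Lemma coord1_diag i : coord1 (M i i).
Proof. by rewrite M_diag /coord1 val_k1. Qed.

Lemma offdiag_coord1 i j : i != j -> M i j = if coord1 (M i j) then k3 else k2.
Proof. by move/M_offdiag => [->|->]; rewrite /coord1 ?val_k2 ?val_k3. Qed.

Lemma coord2_rS i : i \in S -> coord2 (rS M S i) = ~~ odd #|S|.
Proof.
move=> iS; rewrite /rS coord2_ksum (eq_bigr (fun t => t != i)); last first.
  by move=> t _; case: (eqVneq t i) => [->|ti]; rewrite ?coord2_diag ?coord2_offdiag // eq_sym.
rewrite big_addb_odd (cardsD1 i S) iS.
have -> : [set t in S | t != i] = S :\ i by apply/setP => t; rewrite !inE andbC.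
by rewrite add1n /= negbK.
Qed.

Hypothesis spinc : spinc_pair M S.

(* The spin^c condition for U = {i, m}, i in S and m outside S. *)
Lemma spinc_pair_row i m : i \in S -> m \notin S ->
  coord1 (M m i) = coord1 (rS M S i)
                   (+) (\big[addb/false]_(t in S) coord1 (M m t)) (+) true.
Proof.
move=> iS mS; have im : i != m by apply: contraTneq iS => ->.
have notm t : t \in S -> t != m by move=> tS; apply: contraTneq tS => ->.
have := spinc [set i; m]; rewrite cards2 im /=.
set X := symdiff _ _.
have -> : X :&: S = [set t in S | t \in X] by apply/setP => t; rewrite !inE andbC.
have c1_pair t : coord1 (ksum [set i; m] (fun u => M u t)) = coord1 (M i t) (+) coord1 (M m t).
  by rewrite coord1_ksum big_setU1 ?big_set1 ?inE.
have c2_pair t : coord2 (ksum [set i; m] (fun u => M u t)) = coord2 (M i t) (+) coord2 (M m t).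
  by rewrite coord2_ksum big_setU1 ?big_set1 ?inE.
(* i is in X: M i i + M m i has coord2 = 1, so it is not 1. *)
have iX : i \in X.
  rewrite /X /symdiff !inE eqxx /= eq_k1_coord c2_pair.
  by rewrite coord2_diag coord2_offdiag 1?eq_sym // andbF.
(* For t <> i in S: t is in X iff M i t + M m t = 1, i.e. their coord1 differ. *)
have tX t : t \in S -> t != i -> (t \in X) = coord1 (M i t) (+) coord1 (M m t).
  move=> tS ti; rewrite /X /symdiff !inE (negbTE ti) (negbTE (notm t tS)) /=.
  rewrite eq_k1_coord c1_pair c2_pair andbF orbF.
  by rewrite !coord2_offdiag 1?eq_sym ?notm // andbT.
rewrite -big_addb_odd (bigD1 i) //= iX.
rewrite (eq_bigr (fun t => coord1 (M i t) (+) coord1 (M m t))); last first.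
  by move=> t /andP[tS ti]; rewrite tX.
rewrite big_split /= /rS coord1_ksum !(bigD1 i iS) /= coord1_diag.
set b1 := \big[addb/false]_(_ | _) _; set b2 := \big[addb/false]_(_ | _) _.
by case: (coord1 (M m i)); case: b1; case: b2.
Qed.

End Distinguished.

Lemma big_addb_two_blocks (n k l : nat) (b c : bool) : (k + l <= n)%N ->
  \big[addb/false]_(t < n | (t < k + l)%N) (if (t < k)%N then b else c)
  = (odd k && b) (+) (odd l && c).
Proof.
move=> kln; pose g (u : nat) := if (u < k)%N then b else c.
have iter_addb (a : bool) p : iter p (addb a) false = odd p && a.
  by elim: p => //= p ->; case: a; case: (odd p).
rewrite -(big_ord_widen n g kln) -(big_mkord xpredT).
rewrite (@big_cat_nat _ _ _ k 0 (k + l) _ _ (leq0n k) (leq_addr l k)) /=.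
rewrite (@eq_big_nat _ false addb 0 k g (fun=> b)); last by move=> u /andP[_ uk]; rewrite /g uk.
rewrite (@eq_big_nat _ false addb k (k + l) g (fun=> c)); last first.
  by move=> u /andP[ku _]; rewrite /g ltnNge ku.
by rewrite !big_const_nat !iter_addb subn0 addKn.
Qed.

Section StandardForm.

Variables (n : nat) (M : 'M[K4]_n) (S : {set 'I_n}) (k l r : nat).
Hypothesis HM : standard_form M S k l r.

Lemma mem_S_standard t : (t \in S) = (t < k + l)%N.
Proof. by case: HM => _ [_ [HS [_ _ [_ HkS] _ _]]]; rewrite {1}HS inE HkS. Qed.

Lemma coord1_rS_standard t : t \in S -> coord1 (rS M S t) = (t < k)%N.
Proof.
case: HM => _ [_ [_ [Hrow0 [Hdiag Hoff _] _ _ [HrA _ HrAB]]]] tS.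
have k_gt0 : (0 < k)%N.
  by case: HM => _ [_ [_ [_ _ [lk _] _ _]]]; move: tS; rewrite mem_S_standard; lia.
have n_gt0 : (0 < n)%N := leq_ltn_trans (leq0n t) (ltn_ord t).
pose i0 : 'I_n := Ordinal n_gt0.
have i0S : i0 \in S by rewrite mem_S_standard /=; lia.
have row0 : coord1 (rS M S i0).
  rewrite /rS coord1_ksum (bigD1 i0 i0S) /= coord1_diag // big1 // => u /andP[_ ui].
  rewrite (Hrow0 i0 u) //; case: eqP => [u0|_]; last by rewrite /coord1 val_k2.
  by case/eqP: ui; apply: val_inj.
have [tk|tk] := boolP (t < k)%N; first by rewrite (HrA t i0 tk k_gt0).
have tB : (k <= t < k + l)%N by rewrite leqNgt tk -mem_S_standard.
apply/negP => c1t; move/eqP: (HrAB i0 t k_gt0 tB); apply.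
apply: coord_inj; first by rewrite row0 c1t.
by rewrite !(coord2_rS Hdiag Hoff) // mem_S_standard /=; lia.
Qed.

Lemma coord1_row_outside (m t : 'I_n) : (k + l <= m)%N -> t \in S ->
  let T := \big[addb/false]_(u in S) coord1 (M m u) in
  coord1 (M m t) = if (t < k)%N then T else ~~ T.
Proof.
case: HM => spinc [_ [_ [_ [Hdiag Hoff _] _ _ _]]] km tS T.
have mS : m \notin S by rewrite mem_S_standard -leqNgt.
rewrite (spinc_pair_row Hdiag Hoff spinc tS mS) coord1_rS_standard //.
by rewrite -/T; case: (t < k)%N; case: (T).
Qed.

(* Summing the previous lemma over S constrains the parity T. *)
Lemma parity_row_outside (m : 'I_n) : (k + l <= m)%N ->
  let T := \big[addb/false]_(u in S) coord1 (M m u) in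
  T = (odd k && T) (+) (odd l && ~~ T).
Proof.
move=> km T; have kln : (k + l <= n)%N by have [_ [Hn _]] := HM; rewrite Hn leq_addr.
rewrite -(big_addb_two_blocks T (~~ T) kln) {1}/T.
rewrite (eq_bigl (fun t : 'I_n => (t < k + l)%N)); last by move=> t; rewrite mem_S_standard.
by apply: eq_bigr => t tkl; rewrite coord1_row_outside // mem_S_standard.
Qed.

End StandardForm.

Lemma kconj_select (b : bool) : kconj (if b then k3 else k2) = if ~~ b then k3 else k2.
Proof. by case: b; rewrite /kconj ?val_k2 ?val_k3. Qed.

Lemma odd_diff_pred (k l : nat) : (l <= k)%N ->
  odd `|(k%:Z - l%:Z - 1)%R|%N = ~~ (odd k (+) odd l).
Proof.
rewrite leq_eqVlt => /orP[/eqP->|lk].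
  have -> : (k%:Z - k%:Z - 1 = - (1%:Z))%R by lia.
  by rewrite abszN /=; case: (odd k).
have -> : (k%:Z - l%:Z - 1 = (k - l.+1)%:Z)%R by lia.
by rewrite absz_nat oddB //=; case: (odd k); case: (odd l).
Qed.

Lemma standard_row_identity (T : bool) (k l : nat) : (l <= k)%N ->
  T = (odd k && T) (+) (odd l && ~~ T) ->
  let a := if T then k3 else k2 in
  kadd (kadd (kmulz k%:Z a) (kmulz l%:Z (kconj a))) (kmulz (k%:Z - l%:Z - 1)%R k2) = a.
Proof.
move=> lk; rewrite /kmulz !absz_nat odd_diff_pred // kconj_select.
case: T; case: (odd k); case: (odd l) => //= _;
  by apply: val_inj; rewrite !val_kadd /= ?val_k0 ?val_k2 ?val_k3.
Qed.

Theorem mainTheorem13 (n : nat) (M : 'M[K4]_n) (S : {set 'I_n}) (k l r : nat)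
  (HM : standard_form M S k l r) (m : 'I_n) (Hm : (k + l <= m)%N) :
  exists a : K4, (a = k2 \/ a = k3) /\
    (forall j : 'I_n, (j < k)%N -> M m j = a) /\
    (forall j : 'I_n, (k <= j < k + l)%N -> M m j = kconj a) /\
    kadd (kadd (kmulz k%:Z a) (kmulz l%:Z (kconj a)))
         (kmulz (k%:Z - l%:Z - 1)%R k2) = a.
Proof.
have [_ [_ [_ [_ [Hdiag Hoff _] [lk _] _ _]]]] := HM.
pose T := \big[addb/false]_(u in S) coord1 (M m u).
have entry (j : 'I_n) : (j < k + l)%N -> M m j = if coord1 (M m j) then k3 else k2.
  by move=> jkl; apply: offdiag_coord1 => //; apply: contraTneq jkl => <-; rewrite -leqNgt.
have row (j : 'I_n) : (j < k + l)%N -> coord1 (M m j) = if (j < k)%N then T else ~~ T.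
  by move=> jkl; apply: (coord1_row_outside HM Hm); rewrite (mem_S_standard HM).
exists (if T then k3 else k2); split; first by case: (T); [right | left].
split; [|split].
- move=> j jk; have jkl : (j < k + l)%N by apply: leq_trans jk (leq_addr l k).
  by rewrite entry // row // jk.
- move=> j /andP[kj jkl]; rewrite kconj_select entry // row //.
  by rewrite ltnNge kj.
- exact: standard_row_identity lk (parity_row_outside HM Hm).
Qed.
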